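(* Let $X$ be a compact topological space, let $D\subseteq X$, let $\overline{D}$ be the closure of $D$ in $X$, and put $\partial D:=\overline{D}\setminus D$. Let $\overline{\mathbb{C}}=\mathbb{C}\cup\{\infty\}$ be the Riemann sphere and let $f\colon\overline{D}\to\overline{\mathbb{C}}$ be a continuous map such that $f(D)$ is open in $\overline{\mathbb{C}}$. Let $m:=\inf_{z\in\partial D}|f(z)|\in[0,\infty]$ (with $|\infty|=\infty$) and $B_m:=\{w\in\mathbb{C}\colon |w|<m\}$. Then either $f(D)\supseteq B_m$ (i.e. $f$ takes on $D$ all values of modulus $<m$), or $f(\overline{D})\subseteq\overline{\mathbb{C}}\setminus B_m$ (i.e. all values of $f$ on $\overline{D}$ have modulus $\ge m$).
   Context: Note that $\partial D$ is defined as $\overline{D}\setminus D$; the convention $|\infty|=\infty$ is used. *)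

From HB Require Import structures.
From mathcomp Require Import all_boot all_order all_algebra.
From mathcomp Require Import all_classical all_reals all_analysis.
From mathcomp Require Import complex.
Set Implicit Arguments. Unset Strict Implicit. Unset Printing Implicit Defensive.
Import Order.TTheory GRing.Theory Num.Theory.
Local Open Scope classical_set_scope.
Local Open Scope ring_scope.

(* The complex numbers are R[i] (real_closed's complex R), with modulus Normc.normc.
   The Riemann sphere is  option R[i]:  Some w = the finite point w,
   None = the point at infinity. *)
Definition riemann_sphere (R : realType) := option R[i].

Definition C_open (R : realType) (S : set R[i]) : Prop :=
  forall w, S w -> exists2 e : R, 0 < e &
    forall v, Normc.normc (v - w) < e -> S v.

Definition sphere_open (R : realType) (S : set (riemann_sphere R)) : Prop :=
  C_open (fun w => S (Some w)) /\
  (S None -> exists r : R, forall w, r < Normc.normc w -> S (Some w)).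

Definition sphere_abs (R : realType) (z : riemann_sphere R) : \bar R :=
  match z with Some w => (Normc.normc w)%:E | None => +oo%E end.

Definition sphere_continuous_on (X : topologicalType) (R : realType)
  (A : set X) (f : X -> riemann_sphere R) : Prop :=
  forall S, sphere_open S ->
    exists U : set X, open U /\ A `&` (f @^-1` S) = A `&` U.

From HB Require Import structures.
From mathcomp Require Import all_boot all_order all_algebra.
From mathcomp Require Import all_classical all_reals all_analysis.
From mathcomp Require Import complex.
From mathcomp Require Import ring lra.
Set Implicit Arguments. Unset Strict Implicit. Unset Printing Implicit Defensive.
Import Order.TTheory GRing.Theory Num.Theory numFieldNormedType.Exports.
Local Open Scope classical_set_scope.
Local Open Scope ring_scope.

(* Let W be the finite part of f(D) and B_m the open disc of radius m.  W is open
   because f(D) is.  W is also closed in B_m: a limit w in B_m of values of f on D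
   is, by compactness of X, the value f x at some x in the closure of D; x cannot lie
   on the boundary, where |f| >= m > |w|, so w = f x with x in D.  As B_m is convex,
   hence connected (it is a union of segments, each connected like [0, 1]), W either
   contains B_m or misses it; in the latter case |f| >= m on D, and on the boundary
   by definition of m. *)

Section RiemannSphere.
Variable R : realType.
Implicit Types (u v w : R[i]) (t s : R).

Lemma normc_ge0 w : 0 <= Normc.normc w.
Proof. by case: w => a b /=; exact: sqrtr_ge0. Qed.

Lemma normc_real t : Normc.normc (t%:C)%C = `|t|.
Proof. by rewrite /= expr0n /= addr0 sqrtr_sqr. Qed.

Lemma normc_distC u v : Normc.normc (u - v) = Normc.normc (v - u).
Proof. by rewrite -normcN opprB. Qed.

Lemma normc_dist_triangle u v w :
  Normc.normc (u - w) <= Normc.normc (u - v) + Normc.normc (v - w).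
Proof. by have := le_normcD (u - v) (v - w); rewrite addrA subrK. Qed.

Definition C_closure (S : set R[i]) : set R[i] :=
  [set w | forall e, 0 < e -> exists2 v, S v & Normc.normc (v - w) < e].

Definition lerpc u v t : R[i] := u + (t%:C)%C * (v - u).

Lemma lerpc0 u v : lerpc u v 0 = u.
Proof. by rewrite /lerpc (rmorph0 (real_complex R)) mul0r addr0. Qed.

Lemma lerpc1 u v : lerpc u v 1 = v.
Proof. by rewrite /lerpc (rmorph1 (real_complex R)) mul1r addrC subrK. Qed.

Lemma normc_lerpcB u v t s :
  Normc.normc (lerpc u v t - lerpc u v s) = `|t - s| * Normc.normc (v - u).
Proof.
rewrite -normc_real -Normc.normcM; congr Normc.normc.
by rewrite /lerpc (rmorphB (real_complex R)) /=; ring.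
Qed.

Lemma lerpcE u v t : lerpc u v t = ((1 - t)%:C)%C * u + (t%:C)%C * v.
Proof. by rewrite /lerpc (rmorphB (real_complex R)) (rmorph1 (real_complex R)); ring. Qed.

Lemma normc_lerpc_le u v t : 0 <= t <= 1 ->
  Normc.normc (lerpc u v t) <= Num.max (Normc.normc u) (Normc.normc v).
Proof.
move=> /andP[t0 t1]; rewrite lerpcE.
apply: le_trans (le_normcD _ _) _.
rewrite !Normc.normcM !normc_real ger0_norm ?subr_ge0 // ger0_norm //.
have := normc_ge0 u; have := normc_ge0 v.
have : Normc.normc u <= Num.max (Normc.normc u) (Normc.normc v) by rewrite le_max lexx.
have : Normc.normc v <= Num.max (Normc.normc u) (Normc.normc v) by rewrite le_max lexx orbT.
by nra.
Qed.

Lemma lerpc_lt (m : \bar R) u v t : 0 <= t <= 1 ->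
  ((Normc.normc u)%:E < m)%E -> ((Normc.normc v)%:E < m)%E ->
  ((Normc.normc (lerpc u v t))%:E < m)%E.
Proof.
move=> t01 um vm; have := normc_lerpc_le u v t01.
by rewrite -lee_fin => /le_lt_trans; apply; rewrite EFin_max gt_max um vm.
Qed.

Section Connectedness.
Variables (B P : set R[i]) (u v : R[i]).
Hypotheses (P_open : C_open P) (P_closed_in_B : B `&` C_closure P `<=` P)
  (B_segment : forall t, 0 <= t <= 1 -> B (lerpc u v t)).

Let k := Normc.normc (v - u) + 1.

Let k_gt0 : 0 < k.
Proof. by have := normc_ge0 (v - u); rewrite /k; lra. Qed.

Let normc_lerpcB_lt t s e : 0 < e -> `|t - s| < e / k ->
  Normc.normc (lerpc u v t - lerpc u v s) < e.
Proof.
move=> e0 ts; rewrite normc_lerpcB.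
apply: le_lt_trans (_ : `|t - s| * k < e); last by rewrite -ltr_pdivlMr.
by rewrite ler_wpM2l // /k lerDl.
Qed.

Let lerpc_preimage_open : open [set t : R | P (lerpc u v t)].
Proof.
rewrite openE => t /P_open [e e0 He]; apply/nbhs_ballP.
exists (e / k); first by rewrite /= divr_gt0.
move=> s; rewrite -ball_normE /= => ts; apply: He.
by apply: normc_lerpcB_lt => //; rewrite distrC.
Qed.

Let lerpc_preimage_closed_in :
  `[0, 1] `&` closure (`[0, 1] `&` [set t : R | P (lerpc u v t)]) `<=`
  `[0, 1] `&` [set t : R | P (lerpc u v t)].
Proof.
move=> t [t01 tcl]; split => //; apply: P_closed_in_B; split.
  by apply: B_segment; move: t01; rewrite /= in_itv.
move=> e e0.
have [s [[_ Ps] ts]] := tcl _ (nbhsx_ballx t (e / k) (divr_gt0 e0 k_gt0)).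
exists (lerpc u v s) => //; apply: normc_lerpcB_lt => //.
by move: ts; rewrite -ball_normE /ball_ /= distrC.
Qed.

Lemma C_clopen_segment : P u -> P v.
Proof.
move=> Pu; pose T := [set t : R | P (lerpc u v t)].
have : `[0, 1]%classic `&` T = `[0, 1]%classic.
  apply: segment_connected.
  - by exists 0; split; rewrite /= ?in_itv /= ?lexx ?ler01 /T /= ?lerpc0.
  - by exists T; [exact: lerpc_preimage_open|].
  - exists (closure (`[0, 1] `&` T)); first exact: closed_closure.
    apply/seteqP; split; last exact: lerpc_preimage_closed_in.
    by move=> t tT; split; [case: tT|exact: subset_closure].
move/seteqP => [_ /(_ 1)]; rewrite /= in_itv /= lexx ler01 /T /= lerpc1.
by case.
Qed.

End Connectedness.

Definition C_part (S : set (riemann_sphere R)) : set R[i] := [set w | S (Some w)].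

Lemma sphere_open_ball u (r : R) :
  sphere_open (fun z => if z is Some v then Normc.normc (v - u) < r else False).
Proof.
split=> [v vu|//]; exists (r - Normc.normc (v - u)); first by rewrite subr_gt0.
by move=> v' v'v; have := normc_dist_triangle v' v u; lra.
Qed.

Lemma sphere_open_infty (r : R) :
  sphere_open (fun z => if z is Some v then r < Normc.normc v else True).
Proof.
split=> [v rv|_]; last by exists r.
exists (Normc.normc v - r); first by rewrite subr_gt0.
move=> v' v'v; have := normc_dist_triangle v v' 0.
by rewrite !subr0 normc_distC; lra.
Qed.

Lemma sphere_separate_point (z : riemann_sphere R) w : z <> Some w ->
  exists S, exists2 e : R, 0 < e & [/\ sphere_open S, S z &
    forall v, Normc.normc (v - w) < e -> ~ S (Some v)].
Proof.
case: z => [u|_]; last first.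
  exists (fun z =>
    if z is Some v then (Normc.normc w + 1 < Normc.normc v : Prop) else True).
  exists 1; first exact: ltr01.
  split => //; first exact: sphere_open_infty.
  by move=> v vw /=; have := normc_dist_triangle v w 0; rewrite !subr0; lra.
move=> uw; pose d := Normc.normc (u - w).
have d_gt0 : 0 < d.
  rewrite lt_neqAle normc_ge0 andbT eq_sym; apply/eqP => /Normc.eq0_normc/eqP.
  by rewrite subr_eq0 => /eqP uwE; apply: uw; rewrite uwE.
exists (fun z => if z is Some v then (Normc.normc (v - u) < d / 2 : Prop) else False).
exists (d / 2); first by rewrite divr_gt0.
split; first exact: sphere_open_ball.
  by rewrite /= subrr Normc.normc0 divr_gt0.
move=> v vw /= vu; have := normc_dist_triangle u v w.
by rewrite (normc_distC u v) -/d; lra.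
Qed.

Section ClusterValues.
Variables (X : topologicalType) (D : set X) (f : X -> riemann_sphere R).
Hypotheses (X_compact : compact [set: X])
  (f_cont : sphere_continuous_on (closure D) f).

Lemma C_closure_values_attained w : C_closure (C_part (f @` D)) w ->
  exists2 x, closure D x & f x = Some w.
Proof.
move=> w_cl.
pose near_w e := [set x | D x /\ exists2 v, f x = Some v & Normc.normc (v - w) < e].
pose F := filter_from [set e : R | 0 < e] near_w.
have F_proper : ProperFilter F.
  apply: filter_from_proper; last first.
    by move=> e /w_cl [v [x Dx fx] ve]; exists x; split => //; exists v.
  apply: filter_from_filter; first by exists 1; exact: ltr01.
  move=> e1 e2 e1_gt0 e2_gt0; exists (Num.min e1 e2); first by rewrite /= lt_min e1_gt0.
  by move=> x [Dx [v fx]]; rewrite lt_min => /andP[v1 v2]; do 2 split => //; exists v.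
have [x [_ x_cluster]] := X_compact F_proper filterT.
have near_w_F e : 0 < e -> F (near_w e) by exists e.
have x_closure : closure D x.
  move=> U xU; have [y [[Dy _] Uy]] := x_cluster _ U (near_w_F 1 ltr01) xU.
  by exists y.
exists x => //; apply: contrapT => /sphere_separate_point [S [e e_gt0 [S_open Sfx S_far]]].
have [U [U_open US]] := f_cont S_open.
have [_ Ux] : (closure D `&` U) x by rewrite -US.
have [y [[Dy [v fy vw]] Uy]] :=
  x_cluster _ U (near_w_F e e_gt0) (open_nbhs_nbhs (conj U_open Ux)).
have : (closure D `&` f @^-1` S) y by rewrite US; split => //; exact: subset_closure.
by case=> _; rewrite /preimage /= fy; exact: S_far.
Qed.

End ClusterValues.
End RiemannSphere.

Theorem mainTheorem8 (R : realType) (X : topologicalType) (D : set X)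
  (f : X -> riemann_sphere R) :
  compact [set: X] ->
  sphere_continuous_on (closure D) f ->
  sphere_open (f @` D) ->
  let m := ereal_inf (@sphere_abs R @` (f @` (closure D `\` D))) in
  (forall w : R[i], ((Normc.normc w)%:E < m)%E -> exists2 x, D x & f x = Some w)
  \/
  (forall x, closure D x -> (m <= sphere_abs (f x))%E).
Proof.
move=> X_compact f_cont fD_open m.
pose W := C_part (f @` D).
pose B := [set w : R[i] | ((Normc.normc w)%:E < m)%E].
have m_le_boundary x : closure D x -> ~ D x -> (m <= sphere_abs (f x))%E.
  by move=> cDx NDx; apply: ereal_inf_lbound; exists (f x) => //; exists x.
have W_closed_in_B : B `&` C_closure W `<=` W.
  move=> w [wm /(C_closure_values_attained X_compact f_cont) [x cDx fx]].
  have [Dx|NDx] := pselect (D x); first by exists x.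
  by move: wm; have := m_le_boundary x cDx NDx; rewrite fx /= leNgt => /negP.
have [[w0 w0m Ww0]|NW] := pselect (exists2 w, B w & W w).
- left => w1 w1m; apply: (C_clopen_segment fD_open.1 W_closed_in_B _ Ww0).
  by move=> t t01; exact: lerpc_lt.
- right => x cDx; have [Dx|NDx] := pselect (D x); last exact: m_le_boundary.
  case fx: (f x) => [v|]; last by rewrite leey.
  by rewrite /= leNgt; apply/negP => vm; apply: NW; exists v => //; exists x.
Qed.
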